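(* Let $P,Q\in\Gamma_n$ and $0<r\le R$ with $r\le p_i/q_i\le R$ for all $i$. Let $s,t\in\mathbb{R}$ with $0\le s\le4$. If $t\le-1$ and $s+t\le1$, then $$\Big(\frac{r+1}{2r}\Big)^{s-3}\frac{(4-s)r+s}{4r^{t+2}}\Phi_t(P\|Q)\le\zeta_s(Q\|P)\le\Big(\frac{R+1}{2R}\Big)^{s-3}\frac{(4-s)R+s}{4R^{t+2}}\Phi_t(P\|Q).$$ If $t\ge-1$ and $s+t\ge2$, then $$\Big(\frac{R+1}{2R}\Big)^{s-3}\frac{(4-s)R+s}{4R^{t+2}}\Phi_t(P\|Q)\le\zeta_s(Q\|P)\le\Big(\frac{r+1}{2r}\Big)^{s-3}\frac{(4-s)r+s}{4r^{t+2}}\Phi_t(P\|Q).$$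
   Context: $\Gamma_n=\{P=(p_1,\dots,p_n): p_i>0,\ \sum_i p_i=1\}$, $n\ge2$. For $P,Q\in\Gamma_n$ and $s\in\mathbb{R}$: $\Phi_s(P\|Q)=[s(s-1)]^{-1}\big[\sum_i p_i^s q_i^{1-s}-1\big]$ for $s\ne0,1$; $\Phi_0(P\|Q)=\sum_i q_i\ln(q_i/p_i)$; $\Phi_1(P\|Q)=\sum_i p_i\ln(p_i/q_i)$. $\zeta_s(Q\|P)=(s-1)^{-1}\sum_i(q_i-p_i)\big(\frac{p_i+q_i}{2p_i}\big)^{s-1}$ for $s\ne1$; $\zeta_1(Q\|P)=\sum_i(q_i-p_i)\ln\frac{p_i+q_i}{2p_i}$. *)

From Stdlib Require Import Reals.
Open Scope R_scope.

Fixpoint rsum (n : nat) (f : nat -> R) : R :=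
  match n with
  | O => 0
  | S m => rsum m f + f m
  end.

Definition in_Gamma (n : nat) (p : nat -> R) : Prop :=
  (forall i, (i < n)%nat -> 0 < p i) /\ rsum n p = 1.

Definition Phi (n : nat) (s : R) (p q : nat -> R) : R :=
  if Req_EM_T s 0 then rsum n (fun i => q i * ln (q i / p i))
  else if Req_EM_T s 1 then rsum n (fun i => p i * ln (p i / q i))
  else / (s * (s - 1)) *
       (rsum n (fun i => Rpower (p i) s * Rpower (q i) (1 - s)) - 1).

Definition zeta (n : nat) (s : R) (q p : nat -> R) : R :=
  if Req_EM_T s 1 then
    rsum n (fun i => (q i - p i) * ln ((p i + q i) / (2 * p i)))
  else / (s - 1) *
       rsum n (fun i => (q i - p i) * Rpower ((p i + q i) / (2 * p i)) (s - 1)).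

Definition coef (s t x : R) : R :=
  Rpower ((x + 1) / (2 * x)) (s - 3) * (((4 - s) * x + s) / (4 * Rpower x (t + 2))).

From Stdlib Require Import Reals Lra Lia Psatz.
From Coquelicot Require Import Coquelicot.
Open Scope R_scope.

(* Both divergences are f-divergences sum_i q_i f(p_i / q_i) whose generators
   vanish together with their first derivative at 1.  The generator of Phi_t has
   second derivative x^(t-2), that of zeta_s has second derivative
   coef s t x * x^(t-2).  Since r <= 1 <= R, Taylor's formula at 1 turns a bound
   m <= coef s t <= M on [r, R] into the same comparison of the generators on
   [r, R], hence of the divergences.  Under either set of hypotheses on s and t
   the logarithmic derivative of coef s t has constant sign, so the extreme
   values of coef s t on [r, R] are taken at r and R. *)

Lemma rsum_ext n f g :
  (forall i, (i < n)%nat -> f i = g i) -> rsum n f = rsum n g.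
Proof.
  induction n as [|n IH]; intros Hfg; simpl; [reflexivity|].
  rewrite IH, Hfg; auto.
Qed.

Lemma rsum_scal n c f : rsum n (fun i => c * f i) = c * rsum n f.
Proof. induction n as [|n IH]; simpl; [ring|rewrite IH; ring]. Qed.

Lemma rsum_lin3 n a b c f g h :
  rsum n (fun i => a * f i + b * g i + c * h i)
  = a * rsum n f + b * rsum n g + c * rsum n h.
Proof. induction n as [|n IH]; simpl; [ring|rewrite IH; ring]. Qed.

Lemma rsum_le n f g :
  (forall i, (i < n)%nat -> f i <= g i) -> rsum n f <= rsum n g.
Proof.
  induction n as [|n IH]; intros Hfg; simpl; [lra|].
  apply Rplus_le_compat; auto.
Qed.

Lemma rsum_lt n f g : (0 < n)%nat ->
  (forall i, (i < n)%nat -> f i < g i) -> rsum n f < rsum n g.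
Proof.
  intros Hn Hfg. destruct n as [|n]; [lia|]. simpl.
  apply Rplus_le_lt_compat; auto.
  apply rsum_le. intros i Hi. left. auto.
Qed.

Lemma ratio_bounds_straddle_1 n p q r R0 : (0 < n)%nat ->
  in_Gamma n p -> in_Gamma n q ->
  (forall i, (i < n)%nat -> r <= p i / q i <= R0) -> r <= 1 <= R0.
Proof.
  intros Hn [Hp Sp] [Hq Sq] Hpq.
  assert (Hratio : forall i, (i < n)%nat -> r * q i <= p i <= R0 * q i).
  { intros i Hi. specialize (Hpq i Hi). specialize (Hq i Hi).
    replace (p i) with (p i / q i * q i) by (field; lra). split; nra. }
  split; apply Rnot_lt_le; intros Hlt.
  - enough (rsum n q < rsum n p) by lra.
    apply rsum_lt; auto. intros i Hi.
    specialize (Hratio i Hi). specialize (Hq i Hi). nra.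
  - enough (rsum n p < rsum n q) by lra.
    apply rsum_lt; auto. intros i Hi.
    specialize (Hratio i Hi). specialize (Hq i Hi). nra.
Qed.

Definition fdiv (n : nat) (f : R -> R) (p q : nat -> R) : R :=
  rsum n (fun i => q i * f (p i / q i)).

Lemma fdiv_scal n m f p q :
  fdiv n (fun x => m * f x) p q = m * fdiv n f p q.
Proof.
  unfold fdiv. rewrite <- rsum_scal. apply rsum_ext. intros. ring.
Qed.

Lemma fdiv_le n f g p q r R0 :
  (forall i, (i < n)%nat -> 0 < q i) ->
  (forall i, (i < n)%nat -> r <= p i / q i <= R0) ->
  (forall x, r <= x <= R0 -> f x <= g x) ->
  fdiv n f p q <= fdiv n g p q.
Proof.
  intros Hq Hpq Hfg. apply rsum_le. intros i Hi.
  apply Rmult_le_compat_l; [left|apply Hfg]; auto.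
Qed.

Lemma exp_le x y : x <= y -> exp x <= exp y.
Proof. intros [Hlt|<-]; [left; apply exp_increasing|]; lra. Qed.

Lemma nondecreasing_of_derive_nonneg (f f' : R -> R) x y : x <= y ->
  (forall c, x <= c <= y -> derivable_pt_lim f c (f' c)) ->
  (forall c, x <= c <= y -> 0 <= f' c) -> f x <= f y.
Proof.
  intros [Hlt|<-] Hf Hf'; [|lra].
  destruct (MVT_cor2 f f' x y Hlt Hf) as [c [Hc Hcxy]].
  assert (0 <= f' c) by (apply Hf'; lra). nra.
Qed.

Lemma nonneg_of_flat_convex (h h' h'' : R -> R) a b : a <= 1 <= b ->
  (forall x, a <= x <= b -> derivable_pt_lim h x (h' x)) ->
  (forall x, a <= x <= b -> derivable_pt_lim h' x (h'' x)) ->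
  h 1 = 0 -> h' 1 = 0 -> (forall x, a <= x <= b -> 0 <= h'' x) ->
  forall x, a <= x <= b -> 0 <= h x.
Proof.
  intros Hab Dh Dh' H1 H1' Hconv x Hx.
  destruct (Rtotal_order x 1) as [Hlt|[->|Hgt]]; [| lra |].
  - destruct (MVT_cor2 h h' x 1 Hlt) as [c [Hc Hcx]]; [intros; apply Dh; lra|].
    assert (h' c <= h' 1).
    { apply nondecreasing_of_derive_nonneg with h''; [lra| |];
        intros; [apply Dh'|apply Hconv]; lra. }
    nra.
  - destruct (MVT_cor2 h h' 1 x Hgt) as [c [Hc Hcx]]; [intros; apply Dh; lra|].
    assert (h' 1 <= h' c).
    { apply nondecreasing_of_derive_nonneg with h''; [lra| |];
        intros; [apply Dh'|apply Hconv]; lra. }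
    nra.
Qed.

Definition normal_generator (f f'' : R -> R) : Prop :=
  exists f', f 1 = 0 /\ f' 1 = 0 /\
    (forall x, 0 < x -> is_derive f x (f' x)) /\
    (forall x, 0 < x -> is_derive f' x (f'' x)).

Lemma normal_generator_le f f'' g g'' a b : 0 < a -> a <= 1 <= b ->
  normal_generator f f'' -> normal_generator g g'' ->
  (forall x, a <= x <= b -> f'' x <= g'' x) ->
  forall x, a <= x <= b -> f x <= g x.
Proof.
  intros Ha Hab [f' [F0 [F1 [Df Df']]]] [g' [G0 [G1 [Dg Dg']]]] H'' x Hx.
  enough (0 <= g x - f x) by lra.
  apply (nonneg_of_flat_convex (fun x => g x - f x) (fun x => g' x - f' x)
           (fun x => g'' x - f'' x) a b); auto.
  - intros y Hy. apply derivable_pt_lim_minus; apply is_derive_Reals;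
      [apply Dg|apply Df]; lra.
  - intros y Hy. apply derivable_pt_lim_minus; apply is_derive_Reals;
      [apply Dg'|apply Df']; lra.
  - rewrite F0, G0. ring.
  - rewrite F1, G1. ring.
  - intros y Hy. specialize (H'' y Hy). lra.
Qed.

Lemma normal_generator_scal m f f'' : normal_generator f f'' ->
  normal_generator (fun x => m * f x) (fun x => m * f'' x).
Proof.
  intros [f' [F0 [F1 [Df Df']]]]. exists (fun x => m * f' x).
  split; [rewrite F0; ring|].
  split; [rewrite F1; ring|].
  split; intros x Hx; apply is_derive_scal; auto.
Qed.

Definition zeta_generator_d2 (s x : R) : R :=
  Rpower ((x + 1) / (2 * x)) (s - 3) * (((4 - s) * x + s) / (4 * x ^ 4)).

Lemma Rpower_1_l y : Rpower 1 y = 1.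
Proof. unfold Rpower. rewrite ln_1, Rmult_0_r. apply exp_0. Qed.

Lemma midpoint_ratio_pos x : 0 < x -> 0 < (x + 1) / (2 * x).
Proof. intros Hx. apply Rdiv_lt_0_compat; lra. Qed.

Ltac solve_domain :=
  repeat split; try exact I; try assumption; intro; nra.

Lemma normal_generator_zeta s : s <> 1 ->
  normal_generator (fun x => (x - 1) * (1 - Rpower ((x + 1) / (2 * x)) (s - 1)) / (s - 1))
    (zeta_generator_d2 s).
Proof.
  intros Hs.
  exists (fun x => (1 - Rpower ((x + 1) / (2 * x)) (s - 1)) / (s - 1)
           + (x - 1) * Rpower ((x + 1) / (2 * x)) (s - 2) / (2 * x ^ 2)).
  replace ((1 + 1) / (2 * 1)) with 1 by field. rewrite !Rpower_1_l.
  split; [unfold Rdiv; ring|]. split; [unfold Rdiv; ring|].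
  unfold zeta_generator_d2, Rpower.
  split; intros x Hx; pose proof (midpoint_ratio_pos x Hx);
    auto_derive; try solve_domain; unfold Rdiv;
    set (L := ln ((x + 1) * / (2 * x))).
  - replace ((s - 1) * L) with ((s - 2) * L + L) by ring.
    rewrite exp_plus. unfold L. rewrite exp_ln by lra. field. lra.
  - replace ((s - 1) * L) with ((s - 3) * L + L + L) by ring.
    replace ((s - 2) * L) with ((s - 3) * L + L) by ring.
    rewrite !exp_plus. unfold L. rewrite exp_ln by lra. field. lra.
Qed.

Lemma normal_generator_zeta_1 :
  normal_generator (fun x => (1 - x) * ln ((x + 1) / (2 * x))) (zeta_generator_d2 1).
Proof.
  exists (fun x => - ln ((x + 1) / (2 * x)) + (x - 1) / (x * (x + 1))).
  replace ((1 + 1) / (2 * 1)) with 1 by field. rewrite ln_1.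
  split; [ring|]. split; [field|].
  unfold zeta_generator_d2, Rpower.
  split; intros x Hx; pose proof (midpoint_ratio_pos x Hx);
    auto_derive; try solve_domain; unfold Rdiv.
  - field. lra.
  - set (L := ln ((x + 1) * / (2 * x))).
    replace ((1 - 3) * L) with (- (L + L)) by ring.
    rewrite exp_Ropp, exp_plus. unfold L. rewrite exp_ln by lra. field. lra.
Qed.

Lemma normal_generator_Phi t : t <> 0 -> t <> 1 ->
  normal_generator (fun x => (Rpower x t - 1 - t * (x - 1)) / (t * (t - 1)))
    (fun x => Rpower x (t - 2)).
Proof.
  intros Ht0 Ht1. exists (fun x => (Rpower x (t - 1) - 1) / (t - 1)).
  unfold Rpower. rewrite ln_1, !Rmult_0_r, exp_0.
  split; [unfold Rdiv; ring|]. split; [unfold Rdiv; ring|].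
  split; intros x Hx; auto_derive; try solve_domain.
  - replace (t * ln x) with ((t - 1) * ln x + ln x) by ring.
    rewrite exp_plus, exp_ln by lra. field. repeat split; lra.
  - replace ((t - 1) * ln x) with ((t - 2) * ln x + ln x) by ring.
    rewrite exp_plus, exp_ln by lra. field. repeat split; lra.
Qed.

Lemma normal_generator_Phi_0 :
  normal_generator (fun x => x - 1 - ln x) (fun x => Rpower x (0 - 2)).
Proof.
  exists (fun x => 1 - / x). rewrite ln_1, Rinv_1.
  split; [ring|]. split; [ring|].
  unfold Rpower. split; intros x Hx; auto_derive; try solve_domain.
  - field. lra.
  - replace ((0 - 2) * ln x) with (- (ln x + ln x)) by ring.
    rewrite exp_Ropp, exp_plus, exp_ln by lra. field. lra.
Qed.

Lemma normal_generator_Phi_1 :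
  normal_generator (fun x => x * ln x - x + 1) (fun x => Rpower x (1 - 2)).
Proof.
  exists ln. rewrite ln_1.
  split; [ring|]. split; [reflexivity|].
  unfold Rpower. split; intros x Hx; auto_derive; try solve_domain.
  - field. lra.
  - replace ((1 - 2) * ln x) with (- ln x) by ring.
    rewrite exp_Ropp, exp_ln by lra. field. lra.
Qed.

Lemma midpoint_ratio_div a b : 0 < a -> 0 < b ->
  (a / b + 1) / (2 * (a / b)) = (a + b) / (2 * a).
Proof. intros Ha Hb. field. lra. Qed.

Lemma zeta_fdivergence s : exists psi, normal_generator psi (zeta_generator_d2 s) /\
  forall n p q, in_Gamma n p -> in_Gamma n q -> zeta n s q p = fdiv n psi p q.
Proof.
  unfold zeta, fdiv. destruct (Req_EM_T s 1) as [->|Hs].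
  - eexists. split; [apply normal_generator_zeta_1|].
    intros n p q [Hp _] [Hq _]. apply rsum_ext. intros i Hi.
    specialize (Hp i Hi). specialize (Hq i Hi).
    rewrite midpoint_ratio_div by lra. field. lra.
  - eexists. split; [apply normal_generator_zeta, Hs|].
    intros n p q [Hp Sp] [Hq Sq].
    (* The summands differ by an affine term in (p_i, q_i), which sums to 0. *)
    transitivity (rsum n (fun i =>
      / (s - 1) * ((q i - p i) * Rpower ((p i + q i) / (2 * p i)) (s - 1))
      + / (s - 1) * p i + (- / (s - 1)) * q i)).
    { rewrite rsum_lin3, Sp, Sq. ring. }
    apply rsum_ext. intros i Hi. specialize (Hp i Hi). specialize (Hq i Hi).
    rewrite midpoint_ratio_div by lra. field. lra.
Qed.

Lemma Phi_fdivergence t : exists phi,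
  normal_generator phi (fun x => Rpower x (t - 2)) /\
  forall n p q, in_Gamma n p -> in_Gamma n q -> Phi n t p q = fdiv n phi p q.
Proof.
  unfold Phi, fdiv.
  destruct (Req_EM_T t 0) as [->|Ht0]; [|destruct (Req_EM_T t 1) as [->|Ht1]].
  - eexists. split; [apply normal_generator_Phi_0|].
    intros n p q [Hp Sp] [Hq Sq].
    transitivity (rsum n (fun i => 1 * (q i * ln (q i / p i)) + 1 * p i + (-1) * q i)).
    { rewrite rsum_lin3, Sp, Sq. ring. }
    apply rsum_ext. intros i Hi. specialize (Hp i Hi). specialize (Hq i Hi).
    rewrite !ln_div by lra. field. lra.
  - eexists. split; [apply normal_generator_Phi_1|].
    intros n p q [Hp Sp] [Hq Sq].
    transitivity (rsum n (fun i => 1 * (p i * ln (p i / q i)) + (-1) * p i + 1 * q i)).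
    { rewrite rsum_lin3, Sp, Sq. ring. }
    apply rsum_ext. intros i Hi. specialize (Hq i Hi). field. lra.
  - eexists. split; [apply normal_generator_Phi; assumption|].
    intros n p q [Hp Sp] [Hq Sq].
    transitivity (rsum n (fun i => / (t * (t - 1)) * (Rpower (p i) t * Rpower (q i) (1 - t))
      + (- / (t - 1)) * p i + / t * q i)).
    { rewrite rsum_lin3, Sp, Sq. field. split; intro; apply Ht0 || apply Ht1; lra. }
    apply rsum_ext. intros i Hi. specialize (Hp i Hi). specialize (Hq i Hi).
    assert (Hratio : Rpower (p i / q i) t * q i = Rpower (p i) t * Rpower (q i) (1 - t)).
    { unfold Rpower. rewrite ln_div by lra.
      replace (t * (ln (p i) - ln (q i))) with (t * ln (p i) + - (t * ln (q i))) by ring.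
      replace ((1 - t) * ln (q i)) with (ln (q i) + - (t * ln (q i))) by ring.
      rewrite !exp_plus, exp_ln by lra. ring. }
    rewrite <- Hratio. field. repeat split; try lra; intro; apply Ht0 || apply Ht1; lra.
Qed.

Lemma zeta_generator_d2_coef s t x : 0 < x ->
  zeta_generator_d2 s x = coef s t x * Rpower x (t - 2).
Proof.
  intros Hx. unfold zeta_generator_d2, coef, Rpower.
  replace ((t + 2) * ln x) with ((t - 2) * ln x + ln x + ln x + ln x + ln x) by ring.
  rewrite !exp_plus, exp_ln by lra.
  assert (0 < exp ((t - 2) * ln x)) by apply exp_pos.
  field. split; lra.
Qed.

Lemma coef_affine_pos s x : 0 <= s <= 4 -> 0 < x -> 0 < (4 - s) * x + s.
Proof. intros Hs Hx. destruct (Req_dec s 0) as [->|Hs0]; nra. Qed.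

Definition ln_coef (s t x : R) : R :=
  (s - 3) * (ln (x + 1) - ln 2 - ln x) + ln ((4 - s) * x + s) - ln 4 - (t + 2) * ln x.

Definition ln_coef_numer (s t x : R) : R :=
  - (4 - s) * (t + 1) * x ^ 2 + ((4 - s) ^ 2 - 4 * t - 8) * x - s * (s + t - 1).

Lemma coef_eq_exp s t x : 0 <= s <= 4 -> 0 < x -> coef s t x = exp (ln_coef s t x).
Proof.
  intros Hs Hx. pose proof (coef_affine_pos s x Hs Hx).
  unfold coef, ln_coef, Rpower. rewrite ln_div, ln_mult by lra.
  replace ((s - 3) * (ln (x + 1) - ln 2 - ln x) + ln ((4 - s) * x + s) - ln 4
           - (t + 2) * ln x)
    with ((s - 3) * (ln (x + 1) - (ln 2 + ln x))
          + (ln ((4 - s) * x + s) + - (ln 4 + (t + 2) * ln x))) by ring.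
  rewrite !exp_plus, exp_Ropp, exp_plus, !exp_ln by lra.
  assert (0 < exp ((t + 2) * ln x)) by apply exp_pos.
  field. lra.
Qed.

Lemma derivable_pt_lim_ln_coef s t x : 0 <= s <= 4 -> 0 < x ->
  derivable_pt_lim (ln_coef s t) x
    (ln_coef_numer s t x / (x * (x + 1) * ((4 - s) * x + s))).
Proof.
  intros Hs Hx. pose proof (coef_affine_pos s x Hs Hx).
  apply is_derive_Reals. unfold ln_coef, ln_coef_numer. auto_derive.
  - repeat split; lra.
  - field. repeat split; lra.
Qed.

Lemma ln_coef_numer_nonneg s t x : 0 <= s <= 4 -> t <= -1 -> s + t <= 1 -> 0 <= x ->
  0 <= ln_coef_numer s t x.
Proof.
  intros Hs Ht Hst Hx. unfold ln_coef_numer.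
  assert (0 <= (4 - s) * (- (t + 1)) * x ^ 2) by
    (apply Rmult_le_pos; [apply Rmult_le_pos|apply pow2_ge_0]; lra).
  assert (0 <= (4 - s) ^ 2 - 4 * t - 8).
  { replace ((4 - s) ^ 2 - 4 * t - 8) with ((s - 2) ^ 2 + 4 * (1 - s - t)) by ring.
    pose proof (pow2_ge_0 (s - 2)). lra. }
  assert (0 <= ((4 - s) ^ 2 - 4 * t - 8) * x) by (apply Rmult_le_pos; lra).
  assert (0 <= s * (1 - s - t)) by (apply Rmult_le_pos; lra).
  lra.
Qed.

Lemma ln_coef_numer_nonpos s t x : 0 <= s <= 4 -> -1 <= t -> 2 <= s + t -> 0 <= x ->
  ln_coef_numer s t x <= 0.
Proof.
  intros Hs Ht Hst Hx. unfold ln_coef_numer.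
  assert (0 <= (4 - s) * (t + 1) * x ^ 2) by
    (apply Rmult_le_pos; [apply Rmult_le_pos|apply pow2_ge_0]; lra).
  assert (0 <= - ((4 - s) ^ 2 - 4 * t - 8)).
  { replace ((4 - s) ^ 2 - 4 * t - 8) with (4 * (2 - s - t) - s * (4 - s)) by ring.
    assert (0 <= s * (4 - s)) by (apply Rmult_le_pos; lra). lra. }
  assert (0 <= - ((4 - s) ^ 2 - 4 * t - 8) * x) by (apply Rmult_le_pos; lra).
  assert (0 <= s * (s + t - 1)) by (apply Rmult_le_pos; lra).
  lra.
Qed.

Lemma coef_nondecreasing s t x y : 0 <= s <= 4 -> t <= -1 -> s + t <= 1 ->
  0 < x -> x <= y -> coef s t x <= coef s t y.
Proof.
  intros Hs Ht Hst Hx Hxy. rewrite !coef_eq_exp by lra. apply exp_le.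
  apply nondecreasing_of_derive_nonneg
    with (fun z => ln_coef_numer s t z / (z * (z + 1) * ((4 - s) * z + s))); auto.
  - intros z Hz. apply derivable_pt_lim_ln_coef; lra.
  - intros z Hz. pose proof (coef_affine_pos s z Hs ltac:(lra)).
    apply Rmult_le_pos; [apply ln_coef_numer_nonneg; lra|].
    left. apply Rinv_0_lt_compat. apply Rmult_lt_0_compat; [apply Rmult_lt_0_compat|]; lra.
Qed.

Lemma coef_nonincreasing s t x y : 0 <= s <= 4 -> -1 <= t -> 2 <= s + t ->
  0 < x -> x <= y -> coef s t y <= coef s t x.
Proof.
  intros Hs Ht Hst Hx Hxy. rewrite !coef_eq_exp by lra. apply exp_le.
  apply Ropp_le_cancel.
  apply nondecreasing_of_derive_nonneg with (f := opp_fct (ln_coef s t))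
    (f' := fun z => - (ln_coef_numer s t z / (z * (z + 1) * ((4 - s) * z + s)))); auto.
  - intros z Hz. apply derivable_pt_lim_opp, derivable_pt_lim_ln_coef; lra.
  - intros z Hz. pose proof (coef_affine_pos s z Hs ltac:(lra)).
    unfold Rdiv. rewrite Ropp_mult_distr_l.
    apply Rmult_le_pos; [pose proof (ln_coef_numer_nonpos s t z); lra|].
    left. apply Rinv_0_lt_compat. apply Rmult_lt_0_compat; [apply Rmult_lt_0_compat|]; lra.
Qed.

Section Comparison.

Variables (n : nat) (p q : nat -> R) (r R0 s t : R).
Hypotheses (Hp : in_Gamma n p) (Hq : in_Gamma n q) (Hr : 0 < r) (Hr1 : r <= 1 <= R0)
  (Hratio : forall i, (i < n)%nat -> r <= p i / q i <= R0).

Lemma Phi_scal_le_zeta m : (forall y, r <= y <= R0 -> m <= coef s t y) ->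
  m * Phi n t p q <= zeta n s q p.
Proof.
  intros Hm.
  destruct (zeta_fdivergence s) as [psi [Gpsi ->]]; auto.
  destruct (Phi_fdivergence t) as [phi [Gphi ->]]; auto.
  rewrite <- fdiv_scal. apply fdiv_le with r R0; [apply Hq|assumption|].
  apply normal_generator_le with (fun x => m * Rpower x (t - 2)) (zeta_generator_d2 s);
    auto using normal_generator_scal.
  intros x Hx. rewrite (zeta_generator_d2_coef s t) by lra.
  apply Rmult_le_compat_r; [left; apply exp_pos|auto].
Qed.

Lemma zeta_le_Phi_scal M : (forall y, r <= y <= R0 -> coef s t y <= M) ->
  zeta n s q p <= M * Phi n t p q.
Proof.
  intros HM.
  destruct (zeta_fdivergence s) as [psi [Gpsi ->]]; auto.
  destruct (Phi_fdivergence t) as [phi [Gphi ->]]; auto.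
  rewrite <- fdiv_scal. apply fdiv_le with r R0; [apply Hq|assumption|].
  apply normal_generator_le with (zeta_generator_d2 s) (fun x => M * Rpower x (t - 2));
    auto using normal_generator_scal.
  intros x Hx. rewrite (zeta_generator_d2_coef s t) by lra.
  apply Rmult_le_compat_r; [left; apply exp_pos|auto].
Qed.

End Comparison.

Theorem theorem4p1 (n : nat) (p q : nat -> R) (r R0 s t : R) :
  (2 <= n)%nat ->
  in_Gamma n p -> in_Gamma n q ->
  0 < r -> r <= R0 ->
  (forall i, (i < n)%nat -> r <= p i / q i <= R0) ->
  0 <= s <= 4 ->
  ((t <= -1 -> s + t <= 1 ->
     coef s t r * Phi n t p q <= zeta n s q p <= coef s t R0 * Phi n t p q) /\
   (-1 <= t -> 2 <= s + t ->
     coef s t R0 * Phi n t p q <= zeta n s q p <= coef s t r * Phi n t p q)).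
Proof.
  intros Hn Hp Hq Hr HrR Hratio Hs.
  assert (Hr1 : r <= 1 <= R0) by (apply (ratio_bounds_straddle_1 n p q); auto; lia).
  split; intros Ht Hst; split.
  - apply (Phi_scal_le_zeta n p q r R0); auto. intros y Hy. apply coef_nondecreasing; lra.
  - apply (zeta_le_Phi_scal n p q r R0); auto. intros y Hy. apply coef_nondecreasing; lra.
  - apply (Phi_scal_le_zeta n p q r R0); auto. intros y Hy. apply coef_nonincreasing; lra.
  - apply (zeta_le_Phi_scal n p q r R0); auto. intros y Hy. apply coef_nonincreasing; lra.
Qed.
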